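(* Let $(F,\mathrm{wt})$ and $(F',\mathrm{wt}')$ be weighted forests such that $\tilde{\mathbf{X}}_F=\tilde{\mathbf{X}}_{F'}$. Then $\tilde{\mathbf{G}}_F=\tilde{\mathbf{G}}_{F'}$. In other words, the extended generalized degree polynomial $\tilde{\mathbf{G}}_F$ of a weighted forest is determined by its chromatic MacMahon symmetric function $\tilde{\mathbf{X}}_F$.
   Context: All graphs are finite, simple and undirected. A weighted graph $(G,\mathrm{wt})=(V,E,\mathrm{wt})$ is a graph $G=(V,E)$ together with a function $\mathrm{wt}\colon V\to\mathbb{P}$, where $\mathbb{P}$ is the set of positive integers; for $A\subseteq V$ write $\mathrm{wt}(A)=\sum_{v\in A}\mathrm{wt}(v)$. A weighted forest is a weighted graph whose underlying graph is acyclic. A proper coloring of $G$ is a map $\kappa\colon V\to\mathbb{P}$ with $\kappa(u)\neq\kappa(v)$ whenever $uv\in E$; $\mathrm{Col}(G)$ denotes the set of proper colorings. The chromatic MacMahon symmetric function of $(G,\mathrm{wt})$ is the formal power series in two alphabets of commuting indeterminates $x_1,x_2,\dots$ and $y_1,y_2,\dots$ $$\tilde{\mathbf{X}}_G=\sum_{\kappa\in\mathrm{Col}(G)}\prod_{v\in V}x_{\kappa(v)}\,y_{\kappa(v)}^{\mathrm{wt}(v)}.$$ For $A\subseteq V$, an edge is internal to $A$ if both endpoints lie in $A$ and external to $A$ if exactly one endpoint lies in $A$; $\mathrm{int}(A)$ and $\mathrm{ext}(A)$ denote the numbers of internal and external edges. The extended generalized degree polynomial of $(G,\mathrm{wt})$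 is $$\tilde{\mathbf{G}}_G(w,x,y,z)=\sum_{A\subseteq V}w^{\mathrm{ext}(A)}x^{|A|}y^{\mathrm{wt}(A)}z^{\mathrm{int}(A)}.$$ *)

From HB Require Import structures.
From mathcomp Require Import all_boot all_order all_algebra.
From mathcomp Require Import mpoly.

Set Implicit Arguments.
Unset Strict Implicit.
Unset Printing Implicit Defensive.

Import GRing.Theory.
Local Open Scope ring_scope.

Definition simple_graph (V : finType) (E : rel V) : Prop :=
  ssrbool.symmetric E /\ ssrbool.irreflexive E.

Definition acyclic (V : finType) (E : rel V) : Prop :=
  forall s : seq V, uniq s -> (3 <= size s)%N -> ~~ cycle E s.

Definition forest (V : finType) (E : rel V) : Prop :=
  simple_graph E /\ acyclic E.

Definition edges (V : finType) (E : rel V) : {set {set V}} :=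
  [set e : {set V} | [exists u, exists v, (e == [set u; v]) && E u v]].

Definition int_edges (V : finType) (E : rel V) (A : {set V}) : nat :=
  #|[set e in edges E | e \subset A]|.

Definition ext_edges (V : finType) (E : rel V) (A : {set V}) : nat :=
  #|[set e in edges E | #|e :&: A| == 1%N]|.

Definition wtset (V : finType) (wt : V -> nat) (A : {set V}) : nat :=
  (\sum_(v in A) wt v)%N.

Definition proper_coloring (V : finType) (E : rel V) (n : nat)
  (k : {ffun V -> 'I_n}) : bool :=
  [forall u, forall v, E u v ==> (k u != k v)].

(* The chromatic MacMahon symmetric function is a formal power series in the
   variables x_1, x_2, ... and y_1, y_2, ...  We represent it by its family
   of truncations: [chromMacMahon E wt n] is the image of X~_G under
   x_j, y_j |-> 0 for j > n, a polynomial in the 2n variables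
   x_1..x_n (indices lshift) and y_1..y_n (indices rshift).
   Colour i : 'I_n stands for the positive integer i+1.  Two such series are
   equal iff all their truncations are equal. *)
Definition xvar (n : nat) (i : 'I_n) : 'I_(n + n) := lshift n i.
Definition yvar (n : nat) (i : 'I_n) : 'I_(n + n) := rshift n i.

Definition chromMacMahon (V : finType) (E : rel V) (wt : V -> nat) (n : nat)
  : {mpoly int[n + n]} :=
  \sum_(k : {ffun V -> 'I_n} | proper_coloring E k)
     \prod_(v : V) ('X_(xvar (k v)) * 'X_(yvar (k v)) ^+ wt v).

(* Extended generalized degree polynomial, in variables
   w = 'X_0, x = 'X_1, y = 'X_2, z = 'X_3. *)
Definition genDegPoly (V : finType) (E : rel V) (wt : V -> nat)
  : {mpoly int[4]} :=
  \sum_(A : {set V})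
     ('X_(0 : 'I_4) ^+ ext_edges E A * 'X_(1 : 'I_4) ^+ #|A|
      * 'X_(2 : 'I_4) ^+ wtset wt A * 'X_(3 : 'I_4) ^+ int_edges E A).

(* Split the colours 1..a+b into a low palette of size a, specialised by
   x_i, y_i |-> xi, eta, and a high palette of size b, specialised by
   x_i, y_i |-> 1, and group colourings by the set A of low-coloured vertices.
   In a forest, edges between the two colour classes impose no constraint and
   F[B] has chromatic polynomial P_B(c) = c^(|B| - int B) (c-1)^(int B), so the
   specialised X~_F is  sum_A xi^|A| eta^wt(A) P_A(a) P_(V\A)(b).  This is a
   polynomial identity in a, b > 0, hence it holds for arbitrary a, b.  Taking
   a = W/(W-Z), b = W/(W-1), xi = X(W-Z)/(W-1), eta = Y and multiplying by
   W^|E| turns the summand of A into (W/(W-1))^|V| W^ext(A) X^|A| Y^wt(A) Z^int(A),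
   because int A + int (V\A) + ext A = |E|.  Finally |V| and |E| are determined
   by X~_F through its two-colour evaluation x^|V| 2^(|V| - |E|). *)

From HB Require Import structures.
From mathcomp Require Import all_boot all_order all_algebra.
From mathcomp Require Import mpoly.
From mathcomp Require Import ring zify.

Set Implicit Arguments.
Unset Strict Implicit.
Unset Printing Implicit Defensive.
Import GRing.Theory Num.Theory.

Section FunctionUpdate.

Variables (V I : finType).

Definition upd (k : {ffun V -> I}) v c : {ffun V -> I} :=
  [ffun u => if u == v then c else k u].

Lemma card_fibre_upd v (P : pred {ffun V -> I}) (R : {ffun V -> I} -> {set I}) m :
    (forall k c, P (upd k v c) = P k) -> (forall k c, R (upd k v c) = R k) ->
    (forall k, P k -> #|R k| = m) ->
  #|[pred k | P k && (k v \in R k)]| * #|I| = #|[pred k | P k]| * m.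
Proof.
move=> Pupd Rupd cardR.
pose g (p : {ffun V -> I} * I) : nat := P p.1 && (p.2 \in R p.1).
pose phi (p : {ffun V -> I} * I) := (upd p.1 v p.2, p.1 v).
have phiK : involutive phi.
  move=> [k c]; rewrite /phi /upd /= !ffunE eqxx; congr (_, _).
  by apply/ffunP => u; rewrite !ffunE; case: eqP => [->|].
have sum_fibres : \sum_p g p = #|[pred k | P k]| * m.
  rewrite -(pair_bigA _ (fun k c => g (k, c))) -sum_nat_const [RHS]big_mkcond /=.
  apply: eq_bigr => k _; rewrite inE /g /=; case: (boolP (P k)) => [Pk|_].
    by rewrite -(cardR k Pk) -sum1_card [RHS]big_mkcond.
  exact: big1.
rewrite -{}sum_fibres (reindex_inj (inv_inj phiK)).
rewrite -(pair_bigA _ (fun k c => g (phi (k, c)))) -sum_nat_const [LHS]big_mkcond /=.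
apply: eq_bigr => k _; rewrite inE /g /phi /=.
under eq_bigr do rewrite Pupd Rupd.
by rewrite sum_nat_const; case: (_ && _); rewrite ?muln1 ?muln0.
Qed.

End FunctionUpdate.

Lemma card_set_in (T : finType) (S : {set T}) (P : pred T) :
  #|[set x in S | P x]| = \sum_(x in S) P x.
Proof.
rewrite -sum1dep_card [LHS]big_mkcond [RHS]big_mkcond /=.
by apply: eq_bigr => x _; case: (x \in S); case: (P x).
Qed.

Section RingFacts.

Local Open Scope ring_scope.

Definition split_env (R : pzRingType) n (L : {set 'I_n}) (xi eta : R)
    (j : 'I_(n + n)) : R :=
  match split j with
  | inl i => if i \in L then xi else 1
  | inr i => if i \in L then eta else 1
  end.

Lemma split_env_x (R : pzRingType) n (L : {set 'I_n}) (xi eta : R) i :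
  split_env L xi eta (xvar i) = if i \in L then xi else 1.
Proof. by rewrite /split_env /xvar -[lshift n i]/(unsplit (inl i)) unsplitK. Qed.

Lemma split_env_y (R : pzRingType) n (L : {set 'I_n}) (xi eta : R) i :
  split_env L xi eta (yvar i) = if i \in L then eta else 1.
Proof. by rewrite /split_env /yvar -[rshift n i]/(unsplit (inr i)) unsplitK. Qed.

Lemma subst_chrom_monomial (K : fieldType) (W X Y Z : K) (p i q j e w : nat) :
    W - Z != 0 -> W - 1 != 0 ->
  W ^+ (i + j + e) * ((X * (W - Z) / (W - 1)) ^+ (p + i) * Y ^+ w *
    ((W / (W - Z)) ^+ p * (W / (W - Z) - 1) ^+ i) *
    ((W / (W - 1)) ^+ q * (W / (W - 1) - 1) ^+ j)) =
  (W / (W - 1)) ^+ (p + i + q + j) * (W ^+ e * X ^+ (p + i) * Y ^+ w * Z ^+ i).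
Proof.
move=> WZ W1.
have -> : W / (W - Z) - 1 = Z / (W - Z) by field.
have -> : W / (W - 1) - 1 = (W - 1)^-1 by field.
have : (W - Z) * (W - Z)^-1 = 1 by rewrite mulfV.
move: (W - Z) (W - Z)^-1 (W - 1)^-1 => c c' d cc'.
rewrite -[RHS]mulr1 -(expr1n _ (p + i)) -cc' !exprMn !exprD; ring.
Qed.

Lemma eq_poly_at_pos_nat (K : idomainType) (p q : {poly K}) :
    injective (fun m : nat => m%:R : K) ->
    (forall m, (0 < m)%N -> p.[m%:R] = q.[m%:R]) ->
  p = q.
Proof.
move=> natr_inj eq_pq; apply/eqP; rewrite -subr_eq0; apply/eqP.
apply: (@roots_geq_poly_eq0 _ _ [seq i.+1%:R | i <- iota 0 (size (p - q))]).
- by apply/allP => _ /mapP [i _ ->]; rewrite /root !hornerE eq_pq // subrr.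
- by rewrite map_inj_uniq ?iota_uniq // => i j /natr_inj [].
- by rewrite size_map size_iota.
Qed.

End RingFacts.

Section Graph.

Variables (V : finType) (E : rel V) (wt : V -> nat).

Definition nbrs (B : {set V}) (v : V) : {set V} := [set u in B | E v u].

Lemma edgesP {e} : reflect (exists u w, e = [set u; w] /\ E u w) (e \in edges E).
Proof.
rewrite inE; apply: (iffP existsP).
  by move=> [u /existsP [w /andP [/eqP -> Euw]]]; exists u, w.
by move=> [u [w [-> Euw]]]; exists u; apply/existsP; exists w; rewrite eqxx.
Qed.

Lemma in_edges_subset (B : {set V}) e :
  (e \in [set e in edges E | e \subset B]) = (e \in edges E) && (e \subset B).
Proof. by rewrite inE. Qed.

Lemma int_edges0 : int_edges E set0 = 0.
Proof.
apply: eq_card0 => e; rewrite inE subset0.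
apply/andP => -[/edgesP [u [w [-> _]]] /eqP /setP /(_ u)].
by rewrite !inE eqxx.
Qed.

Lemma int_edgesT : int_edges E setT = #|edges E|.
Proof. by apply: eq_card => e; rewrite !inE subsetT andbT. Qed.

Hypotheses (Esym : ssrbool.symmetric E) (Eirr : irreflexive E).

Lemma int_edgesD1 (B : {set V}) v : v \in B ->
  int_edges E B = int_edges E (B :\ v) + #|nbrs B v|.
Proof.
move=> vB; rewrite /int_edges.
have -> : [set e in edges E | e \subset B] =
    [set e in edges E | e \subset B :\ v] :|: [set [set v; u] | u in nbrs B v].
  apply/setP => e; rewrite in_setU !in_edges_subset; apply/idP/idP.
  - case/andP=> /edgesP [x [y [-> Exy]]].
    rewrite !subUset !sub1set !in_setD1 => /andP [xB yB]; rewrite xB yB !andbT.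
    have [xv|xv] := eqVneq x v; [|have [yv|yv] := eqVneq y v].
    + by apply/orP; right; apply/imsetP; exists y; rewrite ?xv // inE yB -xv.
    + apply/orP; right; apply/imsetP; exists x; rewrite ?yv 1?setUC //.
      by rewrite inE xB -yv Esym.
    + by apply/orP; left; apply/andP; split => //; apply/edgesP; exists x, y.
  - case/orP=> [/andP [-> /subset_trans -> //]|]; first exact: subsetDl.
    case/imsetP=> u; rewrite inE => /andP [uB Evu] ->.
    rewrite subUset !sub1set vB uB !andbT; apply/edgesP; by exists v, u.
rewrite cardsU; have -> : #|[set e in edges E | e \subset B :\ v]
    :&: [set [set v; u] | u in nbrs B v]| = 0.
  apply: eq_card0 => e; rewrite in_setI in_edges_subset.
  apply/andP => -[/andP [_ /subsetP eBv]] /imsetP [u _ eE].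
  by move: (eBv v); rewrite eE !inE eqxx => /(_ isT).
rewrite subn0 card_in_imset // => x y; rewrite !inE => /andP [_ Evx] _ /setP exy.
have /set2P [xv|//] : x \in [set v; y] by rewrite -exy !inE eqxx orbT.
by move: Evx; rewrite xv Eirr.
Qed.

Lemma edges_partition A :
  int_edges E A + int_edges E (~: A) + ext_edges E A = #|edges E|.
Proof.
rewrite /int_edges /ext_edges !card_set_in -!big_split -sum1_card /=.
apply: eq_bigr => _ /edgesP [u [w [-> Euw]]].
have uw : u != w by apply: contraTneq Euw => ->; rewrite Eirr.
have -> : #|[set u; w] :&: A| = (u \in A) + (w \in A).
  rewrite -(eq_card (A := [set x in [set u; w] | x \in A])) => [|x]; last by rewrite !inE.
  by rewrite card_set_in big_setU1 ?big_set1 // inE.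
rewrite !subUset !sub1set !inE.
by case: (u \in A); case: (w \in A).
Qed.

Hypothesis Eacyc : acyclic E.

Lemma acyclic_path_adj x s y : uniq (x :: s) -> path E x s -> E x y ->
  y \in x :: s -> y = head x s.
Proof.
move=> s_uniq s_path Exy; rewrite inE => /orP [/eqP yx|ys].
  by move: Exy; rewrite yx Eirr.
case/splitPr: ys s_uniq s_path => s1 s2 s_uniq s_path.
case: s1 s_uniq s_path => [//|z s1] s_uniq s_path; exfalso.
apply: (negP (Eacyc (s := x :: rcons (z :: s1) y) _ _)).
- apply: subseq_uniq s_uniq; rewrite -cats1 -!cat_cons.
  by apply: cat_subseq => //; rewrite sub1seq mem_head.
- by rewrite /= size_rcons.
- rewrite /cycle rcons_path last_rcons Esym Exy andbT.
  by move: s_path; rewrite cat_path /= rcons_path => /and3P [/andP [-> ->]].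
Qed.

Lemma forest_leaf (B : {set V}) :
  B != set0 -> exists2 v, v \in B & #|nbrs B v| <= 1.
Proof.
move=> /set0Pn [x0 x0B].
have [/exists_inP //|/exists_inPn deg2] := boolP [exists v in B, #|nbrs B v| <= 1].
exfalso; have long_path m : exists x s,
    [/\ size s = m, uniq (x :: s), path E x s & all (mem B) (x :: s)].
  elim: m => [|m [x [s [sz s_uniq s_path sB]]]].
    by exists x0, [::]; rewrite /= x0B.
  have xB : x \in B by case/andP: sB.
  have /card_gt0P [y] : 0 < #|nbrs B x :\ head x s|.
    move: (deg2 x xB) (leq_b1 (head x s \in nbrs B x)).
    by rewrite -ltnNge (cardsD1 (head x s)); lia.
  rewrite !inE => /and3P [yh yB Exy].
  have yfresh : y \notin x :: s.
    by apply: contra yh => /(acyclic_path_adj _ _ Exy) ->.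
  by exists y, (x :: s); rewrite /= sz yfresh -cons_uniq s_uniq Esym Exy s_path yB.
have [x [s [sz s_uniq _ _]]] := long_path #|V|.
by move: (max_card (mem (x :: s))); rewrite (card_uniqP s_uniq) /= sz ltnn.
Qed.

Lemma int_edges_le_card (B : {set V}) : int_edges E B <= #|B|.
Proof.
elim: {B}_.+1 {-2}B (ltnSn #|B|) => // m IH B; rewrite ltnS => Bm.
have [->|/forest_leaf [v vB leaf]] := eqVneq B set0; first by rewrite int_edges0.
rewrite (int_edgesD1 vB) (cardsD1 v B) vB add1n.
have : int_edges E (B :\ v) <= #|B :\ v|.
  by apply: IH; move: Bm; rewrite (cardsD1 v B) vB.
by move: leaf; lia.
Qed.

Definition chromn (B : {set V}) (c : nat) : nat :=
  c ^ (#|B| - int_edges E B) * c.-1 ^ int_edges E B.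

Lemma chromn0 c : chromn set0 c = 1.
Proof. by rewrite /chromn int_edges0 cards0. Qed.

Lemma chromn_leaf (B : {set V}) v c : v \in B -> #|nbrs B v| <= 1 ->
  chromn B c = chromn (B :\ v) c * (c - #|nbrs B v|).
Proof.
move=> vB leaf; rewrite /chromn (int_edgesD1 vB) (cardsD1 v B) vB.
have := int_edges_le_card (B :\ v).
move: leaf; rewrite leq_eqVlt ltnS leqn0 => /orP [/eqP ->|/eqP ->] int_le.
- have -> : 1 + #|B :\ v| - (int_edges E (B :\ v) + 1) =
            #|B :\ v| - int_edges E (B :\ v) by lia.
  by rewrite expnD expn1 subn1 mulnA.
- have -> : 1 + #|B :\ v| - (int_edges E (B :\ v) + 0) =
            (#|B :\ v| - int_edges E (B :\ v)).+1 by lia.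
  by rewrite addn0 subn0 expnS -mulnA mulnC.
Qed.

Section SplitColorings.

Variable n : nat.
Implicit Types (L : {set 'I_n}) (A U : {set V}) (k : {ffun V -> 'I_n}).

Definition split_coloring L A U k : bool :=
  [forall u in U, (k u \in L) == (u \in A)] &&
  [forall u in U, forall w in U, E u w ==> (k u != k w)].

Lemma split_coloring0 L A k : split_coloring L A set0 k.
Proof. by apply/andP; split; apply/forall_inP => u; rewrite inE. Qed.

Lemma split_coloringT L A k :
  split_coloring L A setT k = proper_coloring E k && ([set v | k v \in L] == A).
Proof.
rewrite /split_coloring /proper_coloring andbC; congr andb.
  by apply: eq_forallb => u; rewrite in_setT; apply: eq_forallb => w; rewrite in_setT.
apply/forall_inP/eqP => [side|<- u _]; last by rewrite inE.
by apply/setP => u; rewrite inE; apply/eqP/side.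
Qed.

Lemma split_coloringC L A U k :
  split_coloring (~: L) (~: A) U k = split_coloring L A U k.
Proof.
congr andb; apply: eq_forallb_in => u _.
by rewrite !inE; case: (k u \in L); case: (u \in A).
Qed.

Lemma eq_in_split_coloring L A U k k' : {in U, k =1 k'} ->
  split_coloring L A U k = split_coloring L A U k'.
Proof.
move=> eqk; congr andb; apply: eq_forallb_in => u uU; rewrite eqk //.
by apply: eq_forallb_in => w wU; rewrite eqk.
Qed.

Lemma nbrsD1 U v : v \in U -> {subset nbrs U v <= U :\ v}.
Proof.
move=> vU u; rewrite inE => /andP [uU Evu]; rewrite !inE uU andbT.
by apply: contraTneq Evu => ->; rewrite Eirr.
Qed.

Lemma split_coloringD1 L A U v k : v \in U -> v \in A ->
  split_coloring L A U k =
  split_coloring L A (U :\ v) k && (k v \in L :\: k @: nbrs U v).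
Proof.
move=> vU vA; apply/idP/idP.
- case/andP=> /forall_inP side /forall_inP prop.
  apply/andP; split; first (apply/andP; split).
  + by apply/forall_inP => u /setD1P [_ uU]; apply: side.
  + apply/forall_inP => u /setD1P [_ uU]; apply/forall_inP => w /setD1P [_ wU].
    by move/forall_inP: (prop u uU); apply.
  + rewrite in_setD (eqP (side v vU)) vA andbT.
    apply/imsetP => -[u]; rewrite inE => /andP [uU Evu] kvu.
    by move/forall_inP: (prop v vU) => /(_ u uU); rewrite Evu kvu eqxx.
- case/andP=> /andP [/forall_inP side /forall_inP prop].
  rewrite in_setD => /andP [kv_fresh kvL].
  have nbr_col u : u \in U -> E v u -> k v != k u.
    move=> uU Evu; apply: contraNneq kv_fresh => ->.
    by apply: imset_f; rewrite inE uU Evu.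
  apply/andP; split.
  + apply/forall_inP => u uU; have [->|uv] := eqVneq u v; first by rewrite kvL vA.
    by apply: side; rewrite !inE uv.
  + apply/forall_inP => u uU; apply/forall_inP => w wU; apply/implyP => Euw.
    have [uv|uv] := eqVneq u v; have [wv|wv] := eqVneq w v.
    * by move: Euw; rewrite uv wv Eirr.
    * by rewrite uv; apply: nbr_col; rewrite // -uv.
    * by rewrite wv eq_sym; apply: nbr_col; rewrite // Esym -wv.
    * have uUv : u \in U :\ v by rewrite !inE uv.
      have wUv : w \in U :\ v by rewrite !inE wv.
      by move/forall_inP: (prop u uUv) => /(_ w wUv); rewrite Euw.
Qed.

Lemma card_admissible_leaf L A U v k :
  v \in U -> #|nbrs U v| <= 1 -> split_coloring L A (U :\ v) k ->
  #|L :\: k @: nbrs U v| = #|L| - #|nbrs (U :&: A) v|.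
Proof.
(* The leaf has at most one neighbour, whose colour is in [L] iff it is in [A]. *)
move=> vU leaf /andP [/forall_inP side _]; rewrite cardsD.
have sideN u : u \in nbrs U v -> (k u \in L) = (u \in A).
  by move=> /(nbrsD1 vU) /side /eqP.
have -> : nbrs (U :&: A) v = nbrs U v :&: A.
  by apply/setP => u; rewrite !inE -!andbA; congr andb; rewrite andbC.
have -> : L :&: k @: nbrs U v = k @: (nbrs U v :&: A).
  apply/setP => c; apply/idP/idP.
  - case/setIP=> cL /imsetP [u uN cu]; apply/imsetP; exists u => //.
    by rewrite inE uN -sideN // -cu.
  - case/imsetP=> u /setIP [uN uA] ->.
    by rewrite inE sideN // uA imset_f.
rewrite card_in_imset // => x y /setIP [xN _] /setIP [yN _] _.
by move/card_le1_eqP: leaf => /(_ x y xN yN).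
Qed.

Lemma card_split_coloring_leaf L A U v : v \in U -> v \in A -> #|nbrs U v| <= 1 ->
  #|[pred k | split_coloring L A U k]| * n =
  #|[pred k | split_coloring L A (U :\ v) k]| * (#|L| - #|nbrs (U :&: A) v|).
Proof.
move=> vU vA leaf.
have Pupd k c :
    split_coloring L A (U :\ v) (upd k v c) = split_coloring L A (U :\ v) k.
  by apply: eq_in_split_coloring => u /setD1P [uv _]; rewrite ffunE (negbTE uv).
have Rupd k c : L :\: upd k v c @: nbrs U v = L :\: k @: nbrs U v.
  congr (_ :\: _); apply: eq_in_imset => u /(nbrsD1 vU) /setD1P [uv _].
  by rewrite ffunE (negbTE uv).
rewrite -[n in _ * n]card_ord -(card_fibre_upd Pupd Rupd); last first.
  by move=> k; apply: card_admissible_leaf.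
congr (_ * _); apply: eq_card => k.
by rewrite [LHS]inE [RHS]inE (split_coloringD1 _ _ vU vA).
Qed.

Lemma card_split_coloring L A U : 0 < n ->
  #|[pred k | split_coloring L A U k]| =
  n ^ #|~: U| * (chromn (U :&: A) #|L| * chromn (U :\: A) #|~: L|).
Proof.
move=> n_gt0; elim: {U}_.+1 {-2}U (ltnSn #|U|) L A => // m IH U.
rewrite ltnS => Um L A.
have [->|/forest_leaf [v vU leaf]] := eqVneq U set0.
  rewrite set0I set0D !chromn0 setC0 cardsT !muln1.
  transitivity #|{ffun V -> 'I_n}|; last by rewrite card_ffun card_ord.
  by apply: eq_card => k; rewrite inE split_coloring0.
wlog vA : L A / v \in A => [wlog_vA|].
  have [|vnA] := boolP (v \in A); first exact: wlog_vA.
  have UCA : U :&: ~: A = U :\: A by rewrite setDE.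
  have UDCA : U :\: ~: A = U :&: A by rewrite setDE setCK.
  have := wlog_vA (~: L) (~: A); rewrite inE vnA UCA UDCA setCK => /(_ isT).
  rewrite [chromn (U :\: A) _ * _]mulnC => <-.
  by apply: eq_card => k; rewrite !inE split_coloringC.
have vUA : v \in U :&: A by rewrite inE vU vA.
have leafA : #|nbrs (U :&: A) v| <= 1.
  apply: leq_trans leaf; apply/subset_leq_card/subsetP => u.
  by rewrite !inE -andbA => /and3P [-> _ ->].
have UvA : (U :\ v) :&: A = (U :&: A) :\ v by rewrite setIDAC.
have UvDA : (U :\ v) :\: A = U :\: A.
  by apply/setP => u; rewrite !inE; case: eqP => // ->; rewrite vA.
have cardCUv : #|~: (U :\ v)| = #|~: U|.+1.
  by move: (cardsC U) (cardsC (U :\ v)) (cardsD1 v U); rewrite vU; lia.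
have := card_split_coloring_leaf L vU vA leaf.
rewrite (IH (U :\ v)); last by move: Um; rewrite (cardsD1 v U) vU.
rewrite UvA UvDA cardCUv (chromn_leaf _ vUA leafA) expnS => step.
by apply/eqP; rewrite -(eqn_pmul2r n_gt0) step; apply/eqP; nia.
Qed.

Lemma card_split_coloringT L A : 0 < n ->
  #|[pred k | split_coloring L A setT k]| = chromn A #|L| * chromn (~: A) #|~: L|.
Proof.
by move=> n_gt0; rewrite card_split_coloring // setCT cards0 mul1n setTI setTD.
Qed.

End SplitColorings.

Local Open Scope ring_scope.

Lemma chromMacMahon_split_env (R : comNzRingType) n (L : {set 'I_n}) (xi eta : R) :
  mmap intr (split_env L xi eta) (chromMacMahon E wt n) =
  \sum_(A : {set V})
     (xi ^+ #|A| * eta ^+ wtset wt A) *+ #|[pred k | split_coloring L A setT k]|.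
Proof.
have eval_monomial (k : {ffun V -> 'I_n}) : mmap intr (split_env L xi eta)
      (\prod_v ('X_(xvar (k v)) * 'X_(yvar (k v)) ^+ wt v)) =
    xi ^+ #|[set v | k v \in L]| * eta ^+ wtset wt [set v | k v \in L].
  rewrite rmorph_prod.
  under eq_bigr do rewrite rmorphM rmorphXn /= !mmapX !mmap1U split_env_x split_env_y.
  rewrite (bigID (fun v => k v \in L)) /=.
  rewrite [X in _ * X]big1 => [|v /negbTE ->]; last by rewrite expr1n mulr1.
  rewrite mulr1 (eq_bigr (fun v => xi * eta ^+ wt v)) => [|v ->] //.
  rewrite (eq_bigl (fun v => v \in [set v | k v \in L])) => [|v]; last by rewrite inE.
  by rewrite big_split prodr_const /wtset prodrXr.
rewrite /chromMacMahon rmorph_sum /=; under eq_bigr do rewrite eval_monomial.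
rewrite (partition_big (fun k : {ffun V -> 'I_n} => [set v | k v \in L]) xpredT) //=.
apply: eq_bigr => A _; rewrite -sumr_const.
rewrite (eq_bigr (fun _ => xi ^+ #|A| * eta ^+ wtset wt A)) => [|k /andP [_ /eqP ->]] //.
by apply: eq_bigl => k; rewrite inE split_coloringT.
Qed.

Lemma chromMacMahon_two (R : comNzRingType) (x : R) :
  mmap intr (split_env setT x 1) (chromMacMahon E wt 2) =
  x ^+ #|V| *+ (2 ^ (#|V| - #|edges E|))%N.
Proof.
rewrite chromMacMahon_split_env (bigD1 setT) //= big1 ?addr0 => [|A AT].
  rewrite card_split_coloringT // setCT chromn0 muln1 /chromn int_edgesT /=.
  by rewrite !cardsT card_ord exp1n muln1 expr1n mulr1.
suff -> : #|[pred k : {ffun V -> 'I_2} | split_coloring setT A setT k]| = 0%N.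
  by rewrite mulr0n.
apply: eq_card0 => k; rewrite inE; apply: contraNF AT => /andP [/forall_inP side _].
by apply/eqP/setP => v; move: (side v (in_setT v)); rewrite !in_setT => /eqP.
Qed.

Definition chrom_poly (R : nzRingType) (B : {set V}) : {poly R} :=
  'X ^+ (#|B| - int_edges E B) * ('X - 1) ^+ int_edges E B.

Lemma horner_chrom_poly (R : comNzRingType) B (x : R) :
  (chrom_poly R B).[x] = x ^+ (#|B| - int_edges E B) * (x - 1) ^+ int_edges E B.
Proof. by rewrite hornerM !horner_exp hornerX hornerXsubC. Qed.

Lemma chromn_horner (R : comNzRingType) B c : (0 < c)%N ->
  (chromn B c)%:R = (chrom_poly R B).[c%:R].
Proof. by move=> c_gt0; rewrite horner_chrom_poly natrM !natrX -subn1 natrB. Qed.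

Definition bichrom (R : comNzRingType) (xi eta x y : R) : R :=
  \sum_(A : {set V}) xi ^+ #|A| * eta ^+ wtset wt A *
     (chrom_poly R A).[x] * (chrom_poly R (~: A)).[y].

Lemma bichrom_horner_l (R : comNzRingType) (xi eta x y : R) :
  bichrom xi eta x y = (\sum_(A : {set V})
     (xi ^+ #|A| * eta ^+ wtset wt A * (chrom_poly R (~: A)).[y]) *: chrom_poly R A).[x].
Proof. by rewrite horner_sum; apply: eq_bigr => A _; rewrite hornerZ mulrAC. Qed.

Lemma bichrom_horner_r (R : comNzRingType) (xi eta x y : R) :
  bichrom xi eta x y = (\sum_(A : {set V})
     (xi ^+ #|A| * eta ^+ wtset wt A * (chrom_poly R A).[x]) *: chrom_poly R (~: A)).[y].
Proof. by rewrite horner_sum; apply: eq_bigr => A _; rewrite hornerZ. Qed.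

Lemma chromMacMahon_bichrom (R : comNzRingType) (xi eta : R) a b :
    (0 < a)%N -> (0 < b)%N ->
  mmap intr (split_env [set lshift b i | i : 'I_a] xi eta) (chromMacMahon E wt (a + b)) =
  bichrom xi eta a%:R b%:R.
Proof.
move=> a_gt0 b_gt0; set L := [set lshift b i | i : 'I_a].
have cardL : #|L| = a by rewrite card_imset ?card_ord //; apply: lshift_inj.
have cardCL : #|~: L| = b by move: (cardsC L); rewrite cardL card_ord; lia.
rewrite chromMacMahon_split_env; apply: eq_bigr => A _.
by rewrite card_split_coloringT ?addn_gt0 ?a_gt0 // cardL cardCL -mulr_natr natrM
  !chromn_horner // mulrA.
Qed.

Lemma bichrom_subst (K : fieldType) (W X Y Z : K) :
    W - Z != 0 -> W - 1 != 0 ->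
  W ^+ #|edges E| *
    bichrom (X * (W - Z) / (W - 1)) Y (W / (W - Z)) (W / (W - 1)) =
  (W / (W - 1)) ^+ #|V| * \sum_(A : {set V})
     W ^+ ext_edges E A * X ^+ #|A| * Y ^+ wtset wt A * Z ^+ int_edges E A.
Proof.
move=> WZ W1; rewrite mulr_sumr mulr_sumr; apply: eq_bigr => A _.
set i := int_edges E A; set j := int_edges E (~: A).
have cardA : #|A| = (#|A| - i + i)%N by rewrite subnK // int_edges_le_card.
have cardV : #|V| = (#|A| - i + i + (#|~: A| - j) + j)%N.
  by rewrite -cardA -addnA subnK ?cardsC // int_edges_le_card.
rewrite !horner_chrom_poly -/i -/j -(edges_partition A) -/i -/j cardV {1 4}cardA.
exact: subst_chrom_monomial.
Qed.

End Graph.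

Local Open Scope ring_scope.

Lemma bichrom_eq (K : idomainType) (V V' : finType) (E : rel V) (E' : rel V')
    (wt : V -> nat) (wt' : V' -> nat) (xi eta : K) :
    injective (fun m : nat => m%:R : K) ->
    (forall a b, (0 < a)%N -> (0 < b)%N ->
       bichrom E wt xi eta a%:R b%:R = bichrom E' wt' xi eta a%:R b%:R) ->
  forall x y, bichrom E wt xi eta x y = bichrom E' wt' xi eta x y.
Proof.
move=> natr_inj eq_nat x y.
have eq_x b : (0 < b)%N -> bichrom E wt xi eta x b%:R = bichrom E' wt' xi eta x b%:R.
  move=> b_gt0; rewrite !bichrom_horner_l; congr (_.[x]).
  by apply: eq_poly_at_pos_nat natr_inj _ => a a_gt0; rewrite -!bichrom_horner_l eq_nat.
rewrite !bichrom_horner_r; congr (_.[y]).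
by apply: eq_poly_at_pos_nat natr_inj _ => b b_gt0; rewrite -!bichrom_horner_r eq_x.
Qed.

Lemma chromMacMahon_card_eq (V V' : finType) (E : rel V) (E' : rel V')
    (wt : V -> nat) (wt' : V' -> nat) :
    forest E -> forest E' ->
    (forall n, chromMacMahon E wt n = chromMacMahon E' wt' n) ->
  #|V| = #|V'| /\ #|edges E| = #|edges E'|.
Proof.
move=> [[Esym Eirr] Eacyc] [[Esym' Eirr'] Eacyc'] eqX.
have two (x : int) : x ^+ #|V| *+ (2 ^ (#|V| - #|edges E|))%N =
                     x ^+ #|V'| *+ (2 ^ (#|V'| - #|edges E'|))%N.
  rewrite -(chromMacMahon_two wt Esym Eirr Eacyc) eqX.
  exact: chromMacMahon_two wt' Esym' Eirr' Eacyc' _ _.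
have eq_cyc : (#|V| - #|edges E| = #|V'| - #|edges E'|)%N.
  move: (two 1); rewrite !expr1n => /eqP; rewrite eqr_nat.
  by move=> /eqP /(expnI (ltnSn 1)).
have eq_V : #|V| = #|V'|.
  move: (two 2%:R); rewrite -!natrX -!mulrnA eq_cyc => /eqP.
  by rewrite eqr_nat eqn_pmul2r ?expn_gt0 // => /eqP /(expnI (ltnSn 1)).
have := int_edges_le_card Esym Eirr Eacyc setT.
have := int_edges_le_card Esym' Eirr' Eacyc' setT.
by rewrite !int_edgesT !cardsT; split => //; lia.
Qed.

Definition fvar (i : 'I_4) : {fraction {mpoly int[4]}} := tofrac 'X_i.

Lemma fvarB_neq0 i (p : {mpoly int[4]}) : p@_U_(i) = 0 -> fvar i - tofrac p != 0.
Proof.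
move=> p_i; rewrite -tofracB tofrac_eq0 subr_eq0; apply: contra_eqN p_i => /eqP <-.
by rewrite mcoeffXU eqxx oner_eq0.
Qed.

Lemma fvar_natr_inj : injective (fun m : nat => m%:R : {fraction {mpoly int[4]}}).
Proof.
move=> m m' /eqP; rewrite -!(rmorph_nat (@tofrac _)) tofrac_eq -!mpolyC_nat.
by rewrite mpolyC_eq eqr_nat => /eqP.
Qed.

Lemma tofrac_genDegPoly (V : finType) (E : rel V) (wt : V -> nat) :
  tofrac (genDegPoly E wt) = \sum_(A : {set V})
    fvar 0 ^+ ext_edges E A * fvar 1 ^+ #|A| * fvar 2 ^+ wtset wt A *
    fvar 3 ^+ int_edges E A.
Proof. by rewrite rmorph_sum; apply: eq_bigr => A _; rewrite !rmorphM !rmorphXn. Qed.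

Theorem theorem1p1 (V V' : finType) (E : rel V) (E' : rel V')
  (wt : V -> nat) (wt' : V' -> nat) :
  forest E -> forest E' ->
  (forall v, (0 < wt v)%N) -> (forall v, (0 < wt' v)%N) ->
  (forall n : nat, chromMacMahon E wt n = chromMacMahon E' wt' n) ->
  genDegPoly E wt = genDegPoly E' wt'.
Proof.
move=> forestE forestE' _ _ eqX.
have [eq_V eq_E] := chromMacMahon_card_eq forestE forestE' eqX.
have [[Esym Eirr] Eacyc] := forestE; have [[Esym' Eirr'] Eacyc'] := forestE'.
have W0 : fvar 0 != 0.
  by rewrite -[fvar 0]subr0 -(rmorph0 (@tofrac _)) fvarB_neq0 ?mcoeff0.
have W1 : fvar 0 - 1 != 0.
  by rewrite -(rmorph1 (@tofrac _)) fvarB_neq0 // mcoeff1 mnm1_eq0.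
have WZ : fvar 0 - fvar 3 != 0 by rewrite fvarB_neq0 // mcoeffXU.
have eq_bichrom x y :
    bichrom E wt (fvar 1 * (fvar 0 - fvar 3) / (fvar 0 - 1)) (fvar 2) x y =
    bichrom E' wt' (fvar 1 * (fvar 0 - fvar 3) / (fvar 0 - 1)) (fvar 2) x y.
  apply: (bichrom_eq fvar_natr_inj) => a b a_gt0 b_gt0.
  by rewrite -(chromMacMahon_bichrom wt Esym Eirr Eacyc) // eqX
    (chromMacMahon_bichrom wt' Esym' Eirr' Eacyc').
apply/eqP; rewrite -tofrac_eq !tofrac_genDegPoly; apply/eqP.
apply: (mulfI (expf_neq0 #|V| (mulf_neq0 W0 (invr_neq0 W1)))).
rewrite -(bichrom_subst wt Esym Eirr Eacyc (fvar 1) (fvar 2) WZ W1).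
by rewrite eq_bichrom eq_E eq_V (bichrom_subst wt' Esym' Eirr' Eacyc' _ _ WZ W1).
Qed.
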